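(* Let $T$ be a regular $n$-tournament with adjacency matrix $A$. Then for every $i\in[n]$, \[ P_A(z)=\tfrac12\left(z-\tfrac{n-1}{2}\right)\Big[(n+2z+1)\,P_{A_i}(z)+(n-2z-1)\,P_{A_i}(-z-1)\Big]. \]
   Context: An $n$-tournament is a digraph on $n$ vertices in which every pair of distinct vertices is joined by exactly one arc; its adjacency matrix $A=(a_{ij})$ has $a_{ij}=1$ if $v_i$ dominates $v_j$ and $0$ otherwise. A tournament is regular if all vertices have the same out-degree. $P_M(z)=\det(zI-M)$. $[n]=\{1,\dots,n\}$, and $A_i$ denotes the principal submatrix of $A$ obtained by deleting row and column $i$. *)

From mathcomp Require Import all_boot all_order all_algebra.
Set Implicit Arguments. Unset Strict Implicit. Unset Printing Implicit Defensive.
Import GRing.Theory Num.Theory.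
Local Open Scope ring_scope.

Definition is_tournament_adj (R : ringType) (n : nat) (A : 'M[R]_n) : Prop :=
  (forall i j, A i j = 0 \/ A i j = 1) /\
  (forall i, A i i = 0) /\
  (forall i j, i != j -> A i j + A j i = 1).

Definition is_regular_adj (R : ringType) (n : nat) (A : 'M[R]_n) : Prop :=
  forall i j, \sum_(k < n) A i k = \sum_(k < n) A j k.

Definition principal_minor (R : ringType) (m : nat) (A : 'M[R]_m.+1) (i : 'I_m.+1)
  : 'M[R]_m := row' i (col' i A).

From mathcomp Require Import all_boot all_order all_algebra ring.
From mathcomp Require Import fingroup perm.
Set Implicit Arguments. Unset Strict Implicit. Unset Printing Implicit Defensive.
Import GRing.Theory Num.Theory.
Local Open Scope ring_scope.

(* Conjugating by a permutation moves vertex i to the front, so that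
   A = [[0, b], [a, B]] with B = A_i.  Regularity (all in- and out-degrees equal
   c = (n-1)/2) gives a = (zI - B)1 - (z - c)1 and b = 1^T(zI - B) - (z - c)1^T,
   so the Schur complement b adj(zI - B) a of the bordered matrix zI - A is a
   combination of det(zI - B), 1^T(zI - B)1 and 1^T adj(zI - B)1.  By the matrix
   determinant lemma the last one is det(zI - B + J) - det(zI - B); since
   B + B^T = J - I, the matrix zI - B + J is the transpose of (z + 1)I + B, whose
   determinant is P_B(-z - 1) because n - 1 is even. *)

Lemma det_block_scalar_corner (R : idomainType) m (x : R) (u : 'rV[R]_m)
    (v : 'cV[R]_m) (N : 'M[R]_m) :
  \det N != 0 ->
  \det (block_mx x%:M u v N) = x * \det N - (u *m \adj N *m v) 0 0.
Proof.
move=> detN_neq0.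
pose K := block_mx (\det N)%:M 0 (- (\adj N *m v)) (1%:M : 'M[R]_m).
have detK : \det K = \det N by rewrite det_lblock det1 mulr1 det_scalar1.
have eK : block_mx x%:M u v N *m K
    = block_mx ((x * \det N)%:M - u *m \adj N *m v) u 0 N.
  by rewrite mulmx_block !mulmx0 !mulmx1 !add0r !mulmxN !mulmxA mul_mx_adj
    !mul_mx_scalar mul_scalar_mx subrr scale_scalar_mx mulrC.
have := congr1 determinant eK.
rewrite det_mulmx detK det_ublock => /mulIf -> //.
by rewrite det_mx11 !mxE eqxx mulr1n.
Qed.

Lemma det_block_unit_corner (R : comNzRingType) m (u : 'rV[R]_m) (v : 'cV[R]_m)
    (N : 'M[R]_m) :
  \det (block_mx 1%:M u v N) = \det (N - v *m u).
Proof.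
pose K := block_mx (1%:M : 'M[R]_1) 0 (- v) (1%:M : 'M[R]_m).
have detK : \det K = 1 by rewrite det_lblock !det1 mulr1.
have eK : K *m block_mx 1%:M u v N = block_mx 1%:M u 0 (N - v *m u).
  by rewrite mulmx_block !mul0mx !mul1mx !addr0 mulNmx mulmx1 addNr addrC mulNmx.
have := congr1 determinant eK.
by rewrite det_mulmx detK mul1r det_ublock det1 mul1r.
Qed.

Lemma det_add_rank1 (R : idomainType) m (N : 'M[R]_m) (u : 'rV[R]_m)
    (v : 'cV[R]_m) :
  \det N != 0 -> \det (N + v *m u) = \det N + (u *m \adj N *m v) 0 0.
Proof.
move=> detN_neq0; have := det_block_unit_corner (- u) v N.
by rewrite det_block_scalar_corner // mulmxN opprK mul1r !mulNmx mxE opprK => <-.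
Qed.

Lemma adj_form_shift (R : comNzRingType) m (N : 'M[R]_m) (u : 'rV[R]_m)
    (v : 'cV[R]_m) (w : R) :
  ((u *m N - w *: u) *m \adj N *m (N *m v - w *: v)) 0 0
    = \det N * (u *m N *m v) 0 0 - (w * \det N * (u *m v) 0 0) *+ 2
      + w ^+ 2 * (u *m \adj N *m v) 0 0.
Proof.
have uNadj : (u *m N - w *: u) *m \adj N = \det N *: u - w *: (u *m \adj N).
  by rewrite mulmxBl -mulmxA mul_mx_adj mul_mx_scalar -scalemxAl.
have uadjN : u *m \adj N *m N = \det N *: u.
  by rewrite -mulmxA mul_adj_mx mul_mx_scalar.
rewrite uNadj mulmxBl !mulmxBr -!scalemxAl !mulmxA uadjN -!scalemxAl
  -!scalemxAr !scalerA !mxE mulr2n; ring.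
Qed.

Lemma char_poly_mx_block (R : nzRingType) m1 m2 (A : 'M[R]_(m1 + m2)) :
  char_poly_mx A = block_mx (char_poly_mx (ulsubmx A)) (- map_mx polyC (ursubmx A))
                            (- map_mx polyC (dlsubmx A)) (char_poly_mx (drsubmx A)).
Proof.
by rewrite /char_poly_mx -{1}(submxK A) map_block_mx scalar_mx_block
  opp_block_mx add_block_mx !sub0r.
Qed.

Lemma char_poly_border (R : idomainType) m (A : 'M[R]_(1 + m)) :
  char_poly A = ('X - (ulsubmx A 0 0)%:P) * char_poly (drsubmx A)
    - (map_mx polyC (ursubmx A) *m \adj (char_poly_mx (drsubmx A))
         *m map_mx polyC (dlsubmx A)) 0 0.
Proof.
have corner : char_poly_mx (ulsubmx A) = ('X - (ulsubmx A 0 0)%:P)%:M.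
  by apply/matrixP => i j; rewrite !ord1 !mxE.
rewrite /char_poly char_poly_mx_block corner det_block_scalar_corner.
  by rewrite !mulNmx mulmxN opprK.
by apply: monic_neq0; apply: char_poly_monic.
Qed.

Lemma char_poly_comp_opp_sub1 (R : comNzRingType) n (M : 'M[R]_n) :
  char_poly M \Po (- 'X - 1) = (-1) ^+ n * char_poly (- (1%:M + M)).
Proof.
rewrite /char_poly -det_map_mx -detZ; congr (\det _).
apply/matrixP => i j; rewrite !mxE rmorphB rmorphMn /= comp_polyX comp_polyC.
by rewrite !rmorphN !rmorphD /= rmorphMn rmorph1; ring.
Qed.

Lemma char_poly_conj_perm (R : comNzRingType) n (s : 'S_n) (M : 'M[R]_n) :
  char_poly (row_perm s (col_perm s M)) = char_poly M.
Proof.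
rewrite /char_poly; have -> : char_poly_mx (row_perm s (col_perm s M))
    = row_perm s (col_perm s (char_poly_mx M)).
  by apply/matrixP => i j; rewrite !mxE (inj_eq perm_inj).
rewrite row_permE col_permE !det_mulmx !det_perm odd_permV.
by rewrite mulrCA -exprD -signr_odd oddD addbb expr0 mulr1.
Qed.

Lemma tournament_arc_sum (R : nzRingType) n (A : 'M[R]_n) :
  is_tournament_adj A -> forall p q, A p q + A q p = 1 - (p == q)%:R.
Proof.
move=> [_ [diag0 arc]] p q; case: eqVneq => [->|p_neq_q].
  by rewrite diag0 addr0 subrr.
by rewrite arc // subr0.
Qed.

Lemma tournament_col_sum (R : nzRingType) n (A : 'M[R]_n.+1) :
  is_tournament_adj A -> forall q, \sum_k A k q = n%:R - \sum_k A q k.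
Proof.
move=> tA q; transitivity (\sum_k (1 - (k == q)%:R - A q k)).
  by apply: eq_bigr => k _; rewrite -(tournament_arc_sum tA) addrK.
rewrite !sumrB sumr_const card_ord (bigD1 q) //= eqxx big1 => [|k /negPf -> //].
by rewrite addr0 -natr1 addrK.
Qed.

Lemma regular_tournament_score (R : numFieldType) m (A : 'M[R]_m.+1) :
  is_tournament_adj A -> is_regular_adj A ->
  exists c : nat, [/\ m = c.*2, forall p, \sum_k A p k = c%:R
                              & forall q, \sum_k A k q = c%:R].
Proof.
move=> tA regA; have [A01 _] := tA.
pose c := (\sum_(k < m.+1) (A ord0 k == 1%R))%N.
have row_sum p : \sum_k A p k = c%:R.
  rewrite (regA p ord0) /c natr_sum; apply: eq_bigr => k _.
  by case: (A01 ord0 k) => ->; rewrite ?eqxx // eq_sym oner_eq0.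
have col_sum q : \sum_k A k q = m%:R - c%:R.
  by rewrite tournament_col_sum // row_sum.
have total : m.+1%:R * c%:R = m.+1%:R * (m%:R - c%:R) :> R.
  transitivity (\sum_p \sum_k A p k).
    by rewrite (eq_bigr _ (fun p _ => row_sum p)) sumr_const card_ord mulr_natl.
  by rewrite exchange_big (eq_bigr _ (fun q _ => col_sum q)) sumr_const card_ord
    mulr_natl.
have {total} c_eq : c%:R = m%:R - c%:R :> R by apply: mulfI total; rewrite pnatr_eq0.
have m_eq : m = c.*2.
  by apply/eqP; rewrite -(eqr_nat R) -addnn natrD {2}c_eq addrC subrK.
by exists c; split => // q; rewrite col_sum m_eq -addnn natrD addrK.
Qed.

Section FirstVertex.

Variables (R : idomainType) (m c : nat) (A : 'M[R]_(1 + m)).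
Hypotheses (tA : is_tournament_adj A) (m_eq : m = c.*2)
  (row_sum : forall p, \sum_k A p k = c%:R)
  (col_sum : forall q, \sum_k A k q = c%:R).

Let v0 : 'I_(1 + m) := lshift m 0.
Let B := drsubmx A.
Let N := char_poly_mx B.
Let o : 'cV[{poly R}]_m := const_mx 1.
Let oT : 'rV[{poly R}]_m := const_mx 1.
Let w : {poly R} := 'X - c%:R.

Let split_sum (F : 'I_(1 + m) -> R) : \sum_k F k = F v0 + \sum_j F (rshift 1 j).
Proof. by rewrite big_split_ord big_ord1. Qed.

Let in_arcs p : A (rshift 1 p) v0 = c%:R - \sum_j B p j.
Proof.
rewrite -(row_sum (rshift 1 p)) split_sum.
by under [\sum_j B p j]eq_bigr do rewrite !mxE; rewrite addrK.
Qed.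

Let out_arcs q : A v0 (rshift 1 q) = c%:R - \sum_j B j q.
Proof.
rewrite -(col_sum (rshift 1 q)) split_sum.
by under [\sum_j B j q]eq_bigr do rewrite !mxE; rewrite addrK.
Qed.

Lemma dlsubmx_regular : map_mx polyC (dlsubmx A) = N *m o - w *: o.
Proof.
rewrite mulmxBl mul_scalar_mx /w scalerBl; apply/matrixP => p q.
rewrite !mxE (eq_bigr (fun j => (B p j)%:P)) => [|j _]; last by rewrite !mxE mulr1.
by rewrite (ord1 q) in_arcs rmorphB rmorph_sum rmorph_nat /=; ring.
Qed.

Lemma ursubmx_regular : map_mx polyC (ursubmx A) = oT *m N - w *: oT.
Proof.
rewrite mulmxBr mul_mx_scalar /w scalerBl; apply/matrixP => p q.
rewrite !mxE (eq_bigr (fun j => (B j q)%:P)) => [|j _]; last by rewrite !mxE mul1r.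
by rewrite (ord1 p) out_arcs rmorphB rmorph_sum rmorph_nat /=; ring.
Qed.

Let v0_loop : A v0 v0 = 0.
Proof. by case: tA => _ []. Qed.

Let arcs_to_v0 : \sum_j A (rshift 1 j) v0 = c%:R.
Proof. by rewrite -(col_sum v0) split_sum v0_loop add0r. Qed.

Let B_arc_sum p q : B p q + B q p = 1 - (p == q)%:R.
Proof. by rewrite !mxE (tournament_arc_sum tA) eq_rshift. Qed.

Lemma form_ones : (oT *m o) 0 0 = m%:R.
Proof.
rewrite !mxE (eq_bigr (fun _ => 1)) => [|j _]; last by rewrite !mxE mulr1.
by rewrite sumr_const card_ord.
Qed.

Lemma form_char_poly_mx : (oT *m N *m o) 0 0 = c%:R + w * m%:R.
Proof.
rewrite -mulmxA -[N *m o](subrK (w *: o)) -dlsubmx_regular mulmxDr -scalemxAr.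
rewrite mxE [X in _ + X]mxE form_ones.
rewrite -[c%:R in RHS]polyC_natr -arcs_to_v0 rmorph_sum mxE; congr (_ + _).
by apply: eq_bigr => j _; rewrite !mxE mul1r.
Qed.

Lemma char_poly_opp_add1 :
  char_poly (- (1%:M + B)) = char_poly B + (oT *m \adj N *m o) 0 0.
Proof.
rewrite -det_add_rank1; last by apply: monic_neq0; apply: char_poly_monic.
rewrite /char_poly -det_tr; congr (\det _); apply/matrixP => p q.
have := B_arc_sum q p; rewrite !mxE big_ord1 !mxE (eq_sym q p) => /(canRL (addKr _)).
move->; rewrite !rmorphN !rmorphD /= !rmorphN rmorphMn rmorph1 /=; ring.
Qed.

Lemma char_poly_regular_tournament0 :
  char_poly A = ('X - c%:R) * (('X + c.+1%:R) * char_poly B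
                               - ('X - c%:R) * (char_poly B \Po (- 'X - 1))).
Proof.
have even_sign : (-1) ^+ m = 1 :> {poly R} by rewrite -signr_odd m_eq odd_double.
have m_double : m%:R = 2%:R * c%:R :> {poly R} by rewrite m_eq -mul2n natrM.
have corner : ulsubmx A 0 0 = 0 by rewrite !mxE; exact: v0_loop.
rewrite char_poly_border -/B -/N corner dlsubmx_regular ursubmx_regular adj_form_shift.
rewrite form_char_poly_mx form_ones char_poly_comp_opp_sub1 even_sign mul1r.
rewrite char_poly_opp_add1 m_double /w -/(char_poly B) -natr1; ring.
Qed.

End FirstVertex.

Lemma principal_minor0 (R : nzRingType) m (A : 'M[R]_m.+1) :
  principal_minor A ord0 = drsubmx (A : 'M_(1 + m)).
Proof. by apply/matrixP => p q; rewrite !mxE; congr (A _ _); apply: val_inj. Qed.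

Lemma principal_minor_conj_lift_perm (R : nzRingType) m (A : 'M[R]_m.+1) i :
  let s := lift_perm ord0 i 1 in
  principal_minor (row_perm s (col_perm s A)) ord0 = principal_minor A i.
Proof. by apply/matrixP => p q; rewrite !mxE !lift_perm_lift !perm1. Qed.

Lemma tournament_conj_perm (R : nzRingType) n (s : 'S_n) (A : 'M[R]_n) :
  is_tournament_adj A -> is_tournament_adj (row_perm s (col_perm s A)).
Proof.
move=> [A01 [diag0 arc]]; split; [|split] => [p q|p|p q p_neq_q]; rewrite !mxE //.
by rewrite arc // (inj_eq perm_inj).
Qed.

Lemma regular_tournament_char_poly (R : idomainType) m c (A : 'M[R]_m.+1) i :
  is_tournament_adj A -> m = c.*2 ->
  (forall p, \sum_k A p k = c%:R) -> (forall q, \sum_k A k q = c%:R) ->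
  let P := char_poly (principal_minor A i) in
  char_poly A = ('X - c%:R) * (('X + c.+1%:R) * P - ('X - c%:R) * (P \Po (- 'X - 1))).
Proof.
move=> tA m_eq row_sum col_sum P; pose s := lift_perm ord0 i 1.
have sum_conj F : \sum_k F (s k) = \sum_k F k :> R.
  by rewrite [RHS](reindex_inj (@perm_inj _ s)).
rewrite /P -(principal_minor_conj_lift_perm A i) principal_minor0.
rewrite -(char_poly_conj_perm s A); apply: char_poly_regular_tournament0 => //.
- exact: tournament_conj_perm.
- by move=> p; under eq_bigr do rewrite !mxE; rewrite sum_conj.
- by move=> q; under eq_bigr do rewrite !mxE; rewrite (sum_conj (A^~ (s q))).
Qed.

Theorem lemma4p2 (R : numFieldType) (m : nat) (A : 'M[R]_m.+1)
  (hT : is_tournament_adj A) (hreg : is_regular_adj A) (i : 'I_m.+1) :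
  let n : R := m.+1%:R in
  let Pi := char_poly (principal_minor A i) in
  char_poly A =
    (2%:R)^-1%:P * ('X - ((n - 1) / 2%:R)%:P) *
      ((n%:P + 2%:R *: 'X + 1) * Pi
       + (n%:P - 2%:R *: 'X - 1) * (Pi \Po (- 'X - 1))).
Proof.
move=> n Pi; have [c [m_eq row_sum col_sum]] := regular_tournament_score hT hreg.
have n_eq : n = 2%:R * c%:R + 1 by rewrite /n m_eq -natr1 -mul2n natrM.
have half_n : (n - 1) / 2%:R = c%:R by rewrite n_eq addrK mulrC mulKf ?pnatr_eq0.
have half_two : (2%:R)^-1%:P * 2%:R = 1 :> {poly R}.
  by rewrite -polyC_natr -polyCM mulVf ?pnatr_eq0.
rewrite (regular_tournament_char_poly i hT m_eq row_sum col_sum) -/Pi half_n n_eq.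
rewrite -!mul_polyC !rmorphD !rmorphM /= !polyC_natr rmorph1.
by rewrite -natr1 -[LHS]mul1r -{1}half_two; ring.
Qed.
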